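(* Let $\mathbb{X}$ be a reverse differential restriction category (satisfying all of [RD.1]–[RD.9]) with countable disjoint joins. For $g:A\to B$ put $D[g]:=(\iota_0\times 1_A)R[R[g]]\pi_1$, and for $g:A\to A$ put $T(g):=\langle\pi_0 g,D[g]\rangle:A\times A\to A\times A$. Let $f:A\to A$ and let $b_T,b_F:A\to 1$ be maps with $\overline{b_T}\,\overline{b_F}$ nowhere defined. Define $$W:=\bigvee_{i\ge0}(\overline{b_T}f)^i\overline{b_F},\qquad W':=\bigvee_{i\ge0}(\overline{\pi_0b_T}\,T(f))^i\,\overline{\pi_0 b_F},$$ where $h^0=1$ and $h^{i+1}=h\,h^i$. Then $$R[W]=(\iota_0\times 1_A)\,R[W'\pi_1]\,\pi_1 :A\times A\to A,$$ where $\iota_0=\langle 1_A,0\rangle:A\to A\times A$. That is, the reverse derivative of the while-loop is the dagger of the forward-derivative while-loop of the preceding proposition: $[\![v.\mathrm{rd}(x.\texttt{while } b\texttt{ do } f)(a)]\!]$ is obtained by daggering the term $\texttt{let } x=a,y=v\texttt{ in }\mathrm{snd}(\texttt{while }\pi_0b\texttt{ do }(\pi_0f,\mathrm{fd}(x.f)(x).y))$.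
   Context: Composition is written in diagrammatic order: $fg$ means ''first $f$, then $g$''. A restriction category is a category with an operation sending each $f:A\to B$ to a map $\bar f:A\to A$ such that $\bar f f=f$, $\bar f\bar g=\bar g\bar f$ (for $f,g$ with common domain), $\overline{\bar f g}=\bar f\bar g$, and $f\bar g=\overline{fg}\,f$. A map $f$ is total if $\bar f=1$. For parallel maps: - $f\le g$ means $\bar f g=f$; - a nowhere-defined map $\emptyset$ is a least element for $\le$; - $f,g$ are disjoint if $\bar f g$ is nowhere defined; - the join $\bigvee_i f_i$ of a family is its least upper bound for $\le$. ''Countable disjoint joins'' means that every countable family of pairwise disjoint parallel maps has a join, and composition preserves such joins on both sides: $h(\bigvee_i f_i)k=\bigvee_i hf_ik$. The category has restriction products if: - there is an object $1$ with a total map $!_A:A\to 1$ for each $A$ such that every $f:A\to1$ equals $\bar f\,!_A$; - for all $A,B$ there is an object $A\times B$ with total maps $\pi_0,\pi_1$ such that for all $f:C\to A$, $g:C\to B$ there is a unique $\langle f,g\rangle$ with $\langle f,g\rangle\pi_0=\bar g f$ and $\langle f,g\rangle\pi_1=\bar f g$. Write $f\times g=\langle\pi_0f,\pi_1g\rangle$. A Cartesian left additive restriction category is a restriction category with restriction products in which every hom-set is a commutative monoid $(+,0)$ such that: - $\overline{f+g}=\bar f\bar g$ and $\bar 0=1$; - $x(f+g)=xf+xg$ and $x0=\bar x 0$; - $(f+g)\pi_i=f\pi_i+g\pi_i$ and $0\pi_i=0$. Write $\iota_0=\langle 1,0\rangle$ and $\iota_1=\langle 0,1\rangle$. A reverse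 differential restriction category (RDRC) is a Cartesian left additive restriction category with an operation sending each $f:A\to B$ to $R[f]:A\times B\to A$ such that: - [RD.1] $R[f+g]=R[f]+R[g]$ and $R[0]=0$. - [RD.2] $\langle a,b+c\rangle R[f]=\langle a,b\rangle R[f]+\langle a,c\rangle R[f]$ and $\langle a,0\rangle R[f]=\overline{af}\,0$. - [RD.3] $R[\pi_j]=\pi_1\iota_j$. - [RD.4] $R[\langle f,g\rangle]=(1\times\pi_0)R[f]+(1\times\pi_1)R[g]$. - [RD.5] $R[fg]=\langle \pi_0,\langle\pi_0 f,\pi_1\rangle R[g]\rangle R[f]$. - [RD.6] $\langle 1\times\pi_0,\,0\times\pi_1\rangle(\iota_0\times 1)R[R[R[f]]]\pi_1=(1\times\pi_1)R[f]$. - [RD.7] With $g:=(\iota_0\times 1)R[R[f]]\pi_1$, one has $(\iota_0\times1)R[R[g]]\pi_1=\mathrm{ex}\,(\iota_0\times 1)R[R[g]]\pi_1$, where $\mathrm{ex}=\langle\pi_0\times\pi_0,\pi_1\times\pi_1\rangle$. - [RD.8] $\overline{R[f]}=\bar f\times 1$. - [RD.9] $R[\bar f]=(\bar f\times 1)\pi_1$. Semantics of the SDPL formulation: - $[\![\texttt{while } b\texttt{ do } f]\!]=\bigvee_{i\ge0}(\overline{b_T}[\![f]\!])^i\overline{b_F}$; - $[\![v.\mathrm{rd}(x.m)(a)]\!]=\langle\langle1,[\![a]\!]\rangle,[\![v]\!]\rangle R[[\![m]\!]]\pi_1$; - the dagger of $g:A\times B\to C$ is $g^{\dagger[A]}:=(\iota_0\times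 1)R[g]\pi_1:A\times C\to B$. *)

(* Composition is written in DIAGRAMMATIC order: [f ;; g] = "first f, then g". *)

Record ClarC := {
  Ob :> Type;
  Hom : Ob -> Ob -> Type;
  idm : forall A : Ob, Hom A A;
  comp : forall {A B C : Ob}, Hom A B -> Hom B C -> Hom A C;
  comp_id_l : forall A B (f : Hom A B), comp (idm A) f = f;
  comp_id_r : forall A B (f : Hom A B), comp f (idm B) = f;
  comp_assoc : forall A B C D (f : Hom A B) (g : Hom B C) (h : Hom C D),
      comp (comp f g) h = comp f (comp g h);
  rst : forall {A B : Ob}, Hom A B -> Hom A A;
  rst_R1 : forall A B (f : Hom A B), comp (rst f) f = f;
  rst_R2 : forall A B C (f : Hom A B) (g : Hom A C),
      comp (rst f) (rst g) = comp (rst g) (rst f);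
  rst_R3 : forall A B C (f : Hom A B) (g : Hom A C),
      rst (comp (rst f) g) = comp (rst f) (rst g);
  rst_R4 : forall A B C (f : Hom A B) (g : Hom B C),
      comp f (rst g) = comp (rst (comp f g)) f;
  one : Ob;
  bang : forall A : Ob, Hom A one;
  bang_total : forall A, rst (bang A) = idm A;
  bang_unique : forall A (f : Hom A one), f = comp (rst f) (bang A);
  prod : Ob -> Ob -> Ob;
  p0 : forall A B, Hom (prod A B) A;
  p1 : forall A B, Hom (prod A B) B;
  p0_total : forall A B, rst (p0 A B) = idm (prod A B);
  p1_total : forall A B, rst (p1 A B) = idm (prod A B);
  pair : forall {C A B}, Hom C A -> Hom C B -> Hom C (prod A B);
  pair_p0 : forall C A B (f : Hom C A) (g : Hom C B),
      comp (pair f g) (p0 A B) = comp (rst g) f;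
  pair_p1 : forall C A B (f : Hom C A) (g : Hom C B),
      comp (pair f g) (p1 A B) = comp (rst f) g;
  pair_unique : forall C A B (f : Hom C A) (g : Hom C B) (h : Hom C (prod A B)),
      comp h (p0 A B) = comp (rst g) f -> comp h (p1 A B) = comp (rst f) g ->
      h = pair f g;
  add : forall {A B}, Hom A B -> Hom A B -> Hom A B;
  zero : forall A B, Hom A B;
  add_assoc : forall A B (f g h : Hom A B), add (add f g) h = add f (add g h);
  add_comm : forall A B (f g : Hom A B), add f g = add g f;
  add_zero_l : forall A B (f : Hom A B), add (zero A B) f = f;
  rst_add : forall A B (f g : Hom A B), rst (add f g) = comp (rst f) (rst g);
  rst_zero : forall A B, rst (zero A B) = idm A;
  comp_add_r : forall X A B (x : Hom X A) (f g : Hom A B),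
      comp x (add f g) = add (comp x f) (comp x g);
  comp_zero_r : forall X A B (x : Hom X A),
      comp x (zero A B) = comp (rst x) (zero X B);
  add_p0 : forall C A B (f g : Hom C (prod A B)),
      comp (add f g) (p0 A B) = add (comp f (p0 A B)) (comp g (p0 A B));
  add_p1 : forall C A B (f g : Hom C (prod A B)),
      comp (add f g) (p1 A B) = add (comp f (p1 A B)) (comp g (p1 A B));
  zero_p0 : forall C A B, comp (zero C (prod A B)) (p0 A B) = zero C A;
  zero_p1 : forall C A B, comp (zero C (prod A B)) (p1 A B) = zero C B
}.

Arguments Hom {c}.
Arguments idm {c}.
Arguments comp {c A B C}.
Arguments rst {c A B}.
Arguments one {c}.
Arguments bang {c}.
Arguments prod {c}.
Arguments p0 {c A B}.
Arguments p1 {c A B}.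
Arguments pair {c C A B}.
Arguments add {c A B}.
Arguments zero {c A B}.

Infix ";;" := comp (at level 40, left associativity).
Infix "+++" := add (at level 50, left associativity).

Section Derived.
Context {C : ClarC}.

Definition times {A B A' B' : C} (f : Hom A A') (g : Hom B B')
  : Hom (prod A B) (prod A' B') := pair (p0 ;; f) (p1 ;; g).

Definition iota0 (A B : C) : Hom A (prod A B) := pair (idm A) zero.
Definition iota1 (A B : C) : Hom B (prod A B) := pair zero (idm B).

Definition ex (A B C' D : C)
  : Hom (prod (prod A B) (prod C' D)) (prod (prod A C') (prod B D)) :=
  pair (times p0 p0) (times p1 p1).

Definition le {A B : C} (f g : Hom A B) : Prop := rst f ;; g = f.
Definition nowhere_defined {A B : C} (f : Hom A B) : Prop :=
  forall g : Hom A B, le f g.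
Definition disjoint {A B B' : C} (f : Hom A B) (g : Hom A B') : Prop :=
  nowhere_defined (rst f ;; g).
Definition is_join {I : Type} {A B : C} (F : I -> Hom A B) (j : Hom A B) : Prop :=
  (forall i, le (F i) j) /\ (forall u, (forall i, le (F i) u) -> le j u).

Definition countable (I : Type) : Prop :=
  exists e : I -> nat, forall x y, e x = e y -> x = y.
Definition pairwise_disjoint {I : Type} {A B : C} (F : I -> Hom A B) : Prop :=
  forall i j, i <> j -> disjoint (F i) (F j).

Fixpoint pw {A : C} (h : Hom A A) (i : nat) : Hom A A :=
  match i with
  | O => idm A
  | S i' => h ;; pw h i'
  end.

End Derived.

Definition has_countable_disjoint_joins (C : ClarC) : Prop :=
  forall (A B : C) (I : Type) (F : I -> Hom A B),
    countable I -> pairwise_disjoint F ->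
    (exists j, is_join F j) /\
    (forall j, is_join F j ->
       forall (X Y : C) (h : Hom X A) (k : Hom B Y),
         is_join (fun i => h ;; F i ;; k) (h ;; j ;; k)).

Definition Rop (C : ClarC) : Type :=
  forall A B : C, Hom A B -> Hom (prod A B) A.

Section RDAxioms.
Context {C : ClarC} (R : Rop C).
Arguments R {A B}.

Definition Dfwd {A B : C} (g : Hom A B) : Hom (prod A A) B :=
  times (iota0 A B) (idm A) ;; R (R g) ;; p1.

Definition RD1 : Prop :=
  (forall (A B : C) (f g : Hom A B), R (f +++ g) = R f +++ R g) /\
  (forall (A B : C), R (@zero C A B) = zero).
Definition RD2 : Prop :=
  (forall (X A B : C) (f : Hom A B) (a : Hom X A) (b c : Hom X B),
     pair a (b +++ c) ;; R f = pair a b ;; R f +++ pair a c ;; R f) /\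
  (forall (X A B : C) (f : Hom A B) (a : Hom X A),
     pair a zero ;; R f = rst (a ;; f) ;; zero).
Definition RD3 : Prop :=
  (forall A B : C, R (@p0 C A B) = p1 ;; iota0 A B) /\
  (forall A B : C, R (@p1 C A B) = p1 ;; iota1 A B).
Definition RD4 : Prop :=
  forall (X A B : C) (f : Hom X A) (g : Hom X B),
    R (pair f g) = times (idm X) p0 ;; R f +++ times (idm X) p1 ;; R g.
Definition RD5 : Prop :=
  forall (A B D : C) (f : Hom A B) (g : Hom B D),
    R (f ;; g) = pair p0 (pair (p0 ;; f) p1 ;; R g) ;; R f.
Definition RD6 : Prop :=
  forall (A B : C) (f : Hom A B),
    pair (times (idm A) (@p0 C B B)) (times (@zero C A A) (@p1 C B B))
      ;; times (iota0 (prod A B) A) (idm (prod A B)) ;; R (R (R f)) ;; p1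
    = times (idm A) p1 ;; R f.
Definition RD7 : Prop :=
  forall (A B : C) (f : Hom A B),
    let g := times (iota0 A B) (idm A) ;; R (R f) ;; p1 in
    Dfwd g = ex A A A A ;; Dfwd g.
Definition RD8 : Prop :=
  forall (A B : C) (f : Hom A B), rst (R f) = times (rst f) (idm B).
Definition RD9 : Prop :=
  forall (A B : C) (f : Hom A B), R (rst f) = times (rst f) (idm A) ;; p1.

End RDAxioms.

Record RDRC := {
  base :> ClarC;
  RD : Rop base;
  rd1 : RD1 RD; rd2 : RD2 RD; rd3 : RD3 RD; rd4 : RD4 RD; rd5 : RD5 RD;
  rd6 : RD6 RD; rd7 : RD7 RD; rd8 : RD8 RD; rd9 : RD9 RD
}.

Arguments RD {r A B}.

Definition Tfd {X : RDRC} {A : X} (g : Hom A A) : Hom (prod A A) (prod A A) :=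
  pair (p0 ;; g) (Dfwd (@RD X) g).

(* We compare the two loops iterate by iterate.
   Say that G : A × A -> A × A simulates g : A -> A when iota0 ;; G = g ;; iota0
   and (iota0 × 1) ;; R[G] ;; p1 = (1 × p1) ;; R[g].  Identities and guards
   simulate their counterparts, T(f) simulates f (by RD.2 and RD.4-RD.6 applied
   to D[f]), and simulations compose, so each iterate of W' simulates the
   corresponding iterate of W.  The guards are exclusive, so both families are
   pairwise disjoint; R preserves disjoint joins (RD.5, RD.8, RD.9), hence the
   second simulation equation passes to the joins W' and W.  Finally that
   equation for W' and W yields R[W] = (iota0 × 1) ;; R[W' ;; p1] ;; p1 (RD.3). *)

From Stdlib Require Import Arith Lia.

Ltac reassoc := repeat rewrite comp_assoc.

Section RestrictionCalculus.
Context {C : ClarC}.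

Lemma rst_idm (A : C) : rst (idm A) = idm A.
Proof. rewrite <- (comp_id_r _ _ _ (rst (idm A))). apply rst_R1. Qed.

Lemma rst_rst {A B : C} (f : Hom A B) : rst (rst f) = rst f.
Proof.
  rewrite <- (comp_id_r _ _ _ (rst f)) at 1. rewrite rst_R3, rst_idm. apply comp_id_r.
Qed.

Lemma rst_idem {A B : C} (f : Hom A B) : rst f ;; rst f = rst f.
Proof. rewrite <- (rst_rst f) at 1. apply rst_R1. Qed.

Lemma rst_comp_rst {A B D : C} (f : Hom A B) (g : Hom B D) :
  rst (f ;; rst g) = rst (f ;; g).
Proof.
  rewrite rst_R4, rst_R3, rst_R2, <- rst_R3, <- comp_assoc, rst_R1. reflexivity.
Qed.

Lemma rst_comp_total {A B D : C} (f : Hom A B) (g : Hom B D) :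
  rst g = idm B -> rst (f ;; g) = rst f.
Proof. intro H. rewrite <- rst_comp_rst, H, comp_id_r. reflexivity. Qed.

Lemma rst_comp_le {A B D : C} (f : Hom A B) (g : Hom B D) :
  rst (f ;; g) ;; rst f = rst (f ;; g).
Proof. rewrite rst_R2, <- rst_R3, <- comp_assoc, rst_R1. reflexivity. Qed.

Lemma rst_absorb {X Y B : C} (x : Hom X Y) (y : Hom X B) :
  rst y ;; rst x = rst y -> rst x ;; y = y.
Proof.
  intro H. rewrite <- (rst_R1 _ _ _ y) at 1.
  rewrite <- comp_assoc, <- rst_R2, H. apply rst_R1.
Qed.

Lemma total_comp {A B D : C} (f : Hom A B) (g : Hom B D) :
  rst f = idm A -> rst g = idm B -> rst (f ;; g) = idm A.
Proof. intros Hf Hg. rewrite rst_comp_total by exact Hg. exact Hf. Qed.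

Lemma comp_pair {X Y A B : C} (h : Hom X Y) (f : Hom Y A) (g : Hom Y B) :
  h ;; pair f g = pair (h ;; f) (h ;; g).
Proof.
  apply pair_unique.
  - rewrite comp_assoc, pair_p0, <- comp_assoc, rst_R4. reassoc. reflexivity.
  - rewrite comp_assoc, pair_p1, <- comp_assoc, rst_R4. reassoc. reflexivity.
Qed.

Lemma pair_eta {A B : C} : pair (@p0 C A B) p1 = idm _.
Proof.
  symmetry. apply pair_unique.
  - rewrite comp_id_l, p1_total, comp_id_l. reflexivity.
  - rewrite comp_id_l, p0_total, comp_id_l. reflexivity.
Qed.

Lemma pair_components {X A B : C} (h : Hom X (prod A B)) : pair (h ;; p0) (h ;; p1) = h.
Proof. rewrite <- comp_pair, pair_eta. apply comp_id_r. Qed.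

Lemma pair_ext {X A B : C} (h k : Hom X (prod A B)) :
  h ;; p0 = k ;; p0 -> h ;; p1 = k ;; p1 -> h = k.
Proof.
  intros E0 E1. rewrite <- (pair_components h), <- (pair_components k), E0, E1. reflexivity.
Qed.

Lemma rst_pair {X A B : C} (f : Hom X A) (g : Hom X B) :
  rst (pair f g) = rst f ;; rst g.
Proof.
  rewrite <- (rst_comp_total (pair f g) p0 (p0_total _ _ _)), pair_p0, rst_R3, rst_R2.
  reflexivity.
Qed.

Lemma total_pair {X A B : C} (f : Hom X A) (g : Hom X B) :
  rst f = idm X -> rst g = idm X -> rst (pair f g) = idm X.
Proof. intros Hf Hg. rewrite rst_pair, Hf, Hg. apply comp_id_l. Qed.

Lemma pair_rst_l {X Y A B : C} (x : Hom X Y) (f : Hom X A) (g : Hom X B) :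
  pair (rst x ;; f) g = rst x ;; pair f g.
Proof.
  symmetry. apply pair_unique.
  - rewrite comp_assoc, pair_p0, <- comp_assoc, rst_R2, comp_assoc. reflexivity.
  - rewrite comp_assoc, pair_p1, rst_R3, comp_assoc. reflexivity.
Qed.

Lemma pair_rst_r {X Y A B : C} (x : Hom X Y) (f : Hom X A) (g : Hom X B) :
  pair f (rst x ;; g) = rst x ;; pair f g.
Proof.
  symmetry. apply pair_unique.
  - rewrite comp_assoc, pair_p0, rst_R3, comp_assoc. reflexivity.
  - rewrite comp_assoc, pair_p1, <- comp_assoc, rst_R2, comp_assoc. reflexivity.
Qed.

Lemma pair_p0_total {X A B : C} (f : Hom X A) (g : Hom X B) :
  rst g = idm X -> pair f g ;; p0 = f.
Proof. intro H. rewrite pair_p0, H. apply comp_id_l. Qed.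

Lemma pair_p1_total {X A B : C} (f : Hom X A) (g : Hom X B) :
  rst f = idm X -> pair f g ;; p1 = g.
Proof. intro H. rewrite pair_p1, H. apply comp_id_l. Qed.

Lemma pair_p0_p1 {X B D : C} (y : Hom (prod X B) D) : pair (@p0 C X B) y ;; p1 = y.
Proof. apply pair_p1_total, p0_total. Qed.

Lemma times_p0 {A B A' B' : C} (f : Hom A A') (g : Hom B B') :
  times f g ;; p0 = rst (p1 ;; g) ;; p0 ;; f.
Proof. unfold times. rewrite pair_p0. reassoc. reflexivity. Qed.

Lemma times_p1 {A B A' B' : C} (f : Hom A A') (g : Hom B B') :
  times f g ;; p1 = rst (p0 ;; f) ;; p1 ;; g.
Proof. unfold times. rewrite pair_p1. reassoc. reflexivity. Qed.

Lemma times_p0_total {A B A' B' : C} (f : Hom A A') (g : Hom B B') :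
  rst g = idm B -> times f g ;; p0 = p0 ;; f.
Proof.
  intro H. rewrite times_p0, (rst_comp_total p1 g H), p1_total, comp_id_l. reflexivity.
Qed.

Lemma times_p1_total {A B A' B' : C} (f : Hom A A') (g : Hom B B') :
  rst f = idm A -> times f g ;; p1 = p1 ;; g.
Proof.
  intro H. rewrite times_p1, (rst_comp_total p0 f H), p0_total, comp_id_l. reflexivity.
Qed.

Lemma times_idm (A B : C) : times (idm A) (idm B) = idm (prod A B).
Proof. unfold times. rewrite !comp_id_r. apply pair_eta. Qed.

Lemma times_rst_idm {A B D : C} (x : Hom A D) :
  times (rst x) (idm B) = rst (p0 ;; x).
Proof.
  unfold times. rewrite comp_id_r, rst_R4, pair_rst_l, pair_eta, comp_id_r. reflexivity.
Qed.

Lemma pair_times {X A B A' B' : C} (a : Hom X A) (b : Hom X B) (f : Hom A A') (g : Hom B B') :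
  pair a b ;; times f g = pair (a ;; f) (b ;; g).
Proof.
  unfold times. rewrite comp_pair, <- !comp_assoc, pair_p0, pair_p1, !comp_assoc.
  rewrite pair_rst_l, pair_rst_r, (rst_absorb a), (rst_absorb b); try reflexivity;
    rewrite rst_pair.
  - rewrite comp_assoc, rst_comp_le. reflexivity.
  - rewrite comp_assoc, (rst_R2 _ _ _ _ (b ;; g) a), <- comp_assoc, rst_comp_le. reflexivity.
Qed.

Lemma times_comp {A B A' B' A'' B'' : C} (f : Hom A A') (g : Hom B B')
  (f' : Hom A' A'') (g' : Hom B' B'') :
  times f g ;; times f' g' = times (f ;; f') (g ;; g').
Proof. unfold times at 1. rewrite pair_times. unfold times. reassoc. reflexivity. Qed.

Lemma add_zero_r {A B : C} (f : Hom A B) : f +++ zero = f.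
Proof. rewrite add_comm. apply add_zero_l. Qed.

Lemma comp_zero_total {X A B : C} (x : Hom X A) :
  rst x = idm X -> x ;; @zero C A B = zero.
Proof. intro H. rewrite comp_zero_r, H. apply comp_id_l. Qed.

Lemma zero_absorb {A B D : C} (x : Hom A D) (y : Hom A B) :
  rst x ;; zero +++ y = rst x ;; y.
Proof.
  assert (E1 : rst x ;; y = rst (rst x ;; y) ;; zero +++ rst x ;; y).
  { rewrite <- (rst_R1 _ _ _ (rst x ;; y)) at 1.
    rewrite <- (add_zero_l _ _ _ (rst x ;; y)) at 2.
    rewrite comp_add_r. f_equal.
    rewrite rst_R3, <- comp_assoc, (comp_assoc _ _ _ _ _ (rst x)), rst_R2.
    rewrite <- comp_assoc, rst_idem, comp_assoc, rst_R1. reflexivity. }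
  rewrite E1, <- (rst_R1 _ _ _ (rst x ;; zero +++ y)).
  rewrite rst_add, rst_R3, rst_zero, comp_id_r, comp_add_r.
  f_equal.
  - rewrite rst_R3, <- comp_assoc, (comp_assoc _ _ _ _ _ (rst x) (rst y) (rst x)).
    rewrite (rst_R2 _ _ _ _ y x), <- comp_assoc, rst_idem. reflexivity.
  - rewrite comp_assoc, rst_R1. reflexivity.
Qed.

Lemma iota0_p0 (A B : C) : iota0 A B ;; p0 = idm A.
Proof. unfold iota0. rewrite pair_p0, rst_zero. apply comp_id_l. Qed.
Lemma iota0_p1 (A B : C) : iota0 A B ;; p1 = zero.
Proof. unfold iota0. rewrite pair_p1, rst_idm. apply comp_id_l. Qed.
Lemma iota1_p0 (A B : C) : iota1 A B ;; p0 = zero.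
Proof. unfold iota1. rewrite pair_p0, rst_idm. apply comp_id_l. Qed.
Lemma iota1_p1 (A B : C) : iota1 A B ;; p1 = idm B.
Proof. unfold iota1. rewrite pair_p1, rst_zero. apply comp_id_l. Qed.

End RestrictionCalculus.

Ltac prove_total := unfold times, iota0, iota1; repeat first
  [ apply total_comp | apply total_pair | apply rst_idm | apply p0_total
  | apply p1_total | apply rst_zero | apply bang_total ].

Section ProductComputations.
Context {C : ClarC}.

Lemma pair_p0_total_r {X A B Y : C} (f : Hom X A) (g : Hom X B) (k : Hom A Y) :
  rst g = idm X -> pair f g ;; (p0 ;; k) = f ;; k.
Proof. intro H. rewrite <- comp_assoc, pair_p0_total; auto. Qed.
Lemma pair_p1_total_r {X A B Y : C} (f : Hom X A) (g : Hom X B) (k : Hom B Y) :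
  rst f = idm X -> pair f g ;; (p1 ;; k) = g ;; k.
Proof. intro H. rewrite <- comp_assoc, pair_p1_total; auto. Qed.
Lemma zero_p0_r {X A B Y : C} (k : Hom A Y) : @zero C X (prod A B) ;; (p0 ;; k) = zero ;; k.
Proof. rewrite <- comp_assoc, zero_p0. reflexivity. Qed.
Lemma zero_p1_r {X A B Y : C} (k : Hom B Y) : @zero C X (prod A B) ;; (p1 ;; k) = zero ;; k.
Proof. rewrite <- comp_assoc, zero_p1. reflexivity. Qed.

Lemma times_p0_idm_sum (A B D : C) :
  times (@p0 C A B) (idm D) = p0 ;; p0 ;; iota0 A D +++ p1 ;; iota1 A D.
Proof.
  unfold times. symmetry. apply pair_unique.
  - rewrite add_p0, !comp_assoc, iota0_p0, iota1_p0, comp_id_r, comp_zero_total by prove_total.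
    rewrite add_zero_r, rst_comp_total, p1_total, comp_id_l by apply rst_idm. reflexivity.
  - rewrite add_p1, !comp_assoc, iota0_p1, iota1_p1, comp_id_r, !comp_zero_total by prove_total.
    rewrite add_zero_l, (rst_comp_total p0 p0), p0_total, comp_id_l by apply p0_total.
    reflexivity.
Qed.

End ProductComputations.

Ltac prod_simp := unfold times, iota0, iota1; repeat (reassoc; first
  [ rewrite pair_p0_total_r by prove_total | rewrite pair_p1_total_r by prove_total
  | rewrite pair_p0_total by prove_total | rewrite pair_p1_total by prove_total
  | rewrite zero_p0_r | rewrite zero_p1_r | rewrite zero_p0 | rewrite zero_p1
  | rewrite comp_id_l | rewrite comp_id_r
  | rewrite comp_zero_total by prove_total ]).

Ltac prod_ext := repeat apply pair_ext; prod_simp; reflexivity.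

Section JoinsAndDisjointness.
Context {C : ClarC}.

Lemma le_antisym {A B : C} (f g : Hom A B) : le f g -> le g f -> f = g.
Proof.
  unfold le. intros Hfg Hgf.
  assert (Ef : rst f = rst f ;; rst g) by (rewrite <- rst_R3, Hfg; reflexivity).
  assert (Eg : rst g = rst g ;; rst f) by (rewrite <- rst_R3, Hgf; reflexivity).
  assert (E : rst f = rst g) by (rewrite Ef, rst_R2, <- Eg; reflexivity).
  rewrite <- Hfg, E. apply rst_R1.
Qed.

Lemma join_unique {I : Type} {A B : C} (F G : I -> Hom A B) (j1 j2 : Hom A B) :
  (forall i, F i = G i) -> is_join F j1 -> is_join G j2 -> j1 = j2.
Proof.
  intros E [H1 H1'] [H2 H2']. apply le_antisym.
  - apply H1'. intro i. rewrite E. apply H2.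
  - apply H2'. intro i. rewrite <- E. apply H1.
Qed.

Lemma is_join_ext {I : Type} {A B : C} (F G : I -> Hom A B) (j : Hom A B) :
  (forall i, F i = G i) -> is_join F j -> is_join G j.
Proof.
  intros E [H1 H2]. split.
  - intro i. rewrite <- E. apply H1.
  - intros u Hu. apply H2. intro i. rewrite E. apply Hu.
Qed.

Lemma nowhere_defined_unique {A B : C} (n m : Hom A B) :
  nowhere_defined n -> nowhere_defined m -> n = m.
Proof. intros Hn Hm. apply le_antisym; [apply Hn | apply Hm]. Qed.

Lemma nat_countable : countable nat.
Proof. exists (fun n => n). auto. Qed.

Hypothesis HJ : has_countable_disjoint_joins C.

Lemma disjoint_join_comp {X A B Y : C} (F : nat -> Hom A B) (j : Hom A B)
  (h : Hom X A) (k : Hom B Y) :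
  pairwise_disjoint F -> is_join F j -> is_join (fun i => h ;; F i ;; k) (h ;; j ;; k).
Proof. intros Fd Hj. exact (proj2 (HJ A B nat F nat_countable Fd) j Hj X Y h k). Qed.

Lemma empty_join (A B : C) :
  exists e : Hom A B, forall X Y (h : Hom X A) (k : Hom B Y), nowhere_defined (h ;; e ;; k).
Proof.
  destruct (HJ A B Empty_set (fun i : Empty_set => match i return Hom A B with end))
    as [[j Hj] Hcomp].
  - exists (fun i : Empty_set => match i with end). intros x. destruct x.
  - intros i. destruct i.
  - exists j. intros X Y h k. destruct (Hcomp j Hj X Y h k) as [_ Hleast].
    intro u. apply Hleast. intro i. destruct i.
Qed.

Lemma nowhere_defined_comp {X A B Y : C} (h : Hom X A) (n : Hom A B) (k : Hom B Y) :
  nowhere_defined n -> nowhere_defined (h ;; n ;; k).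
Proof.
  intro Hn. destruct (empty_join A B) as [e He].
  assert (E : n = e).
  { apply nowhere_defined_unique; auto.
    specialize (He A B (idm A) (idm B)). rewrite comp_id_l, comp_id_r in He. exact He. }
  subst. apply He.
Qed.

Lemma nowhere_defined_comp_r {A B Y : C} (n : Hom A B) (k : Hom B Y) :
  nowhere_defined n -> nowhere_defined (n ;; k).
Proof. intro H. rewrite <- (comp_id_l _ _ _ n). apply nowhere_defined_comp, H. Qed.

(* A nowhere-defined map has a nowhere-defined domain: it factors through
   the nowhere-defined endomorphism, which is its own restriction. *)
Lemma nowhere_defined_rst {A B : C} (n : Hom A B) :
  nowhere_defined n -> nowhere_defined (rst n).
Proof.
  intro Hn. destruct (empty_join A A) as [m Hm].
  assert (Hm0 : nowhere_defined m).
  { specialize (Hm A A (idm A) (idm A)). rewrite comp_id_l, comp_id_r in Hm. exact Hm. }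
  assert (Rm : rst m = m) by (rewrite <- (comp_id_r _ _ _ (rst m)); apply Hm0).
  assert (E : m ;; n = n) by (apply nowhere_defined_unique; auto; apply nowhere_defined_comp_r, Hm0).
  rewrite <- E, <- Rm, rst_R3, Rm. apply nowhere_defined_comp_r, Hm0.
Qed.

Lemma disjoint_iff {A B B' : C} (f : Hom A B) (g : Hom A B') :
  disjoint f g <-> nowhere_defined (rst f ;; rst g).
Proof.
  unfold disjoint. split; intro H.
  - rewrite <- rst_R3. apply nowhere_defined_rst, H.
  - rewrite <- (rst_R1 _ _ _ g), <- comp_assoc. apply nowhere_defined_comp_r, H.
Qed.

Lemma disjoint_rst_eq {A B B' D D' : C}
  (f : Hom A B) (g : Hom A B') (f' : Hom A D) (g' : Hom A D') :
  rst f = rst f' -> rst g = rst g' -> disjoint f g -> disjoint f' g'.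
Proof. intros Ef Eg. rewrite !disjoint_iff, Ef, Eg. auto. Qed.

Lemma disjoint_sym {A B B' : C} (f : Hom A B) (g : Hom A B') :
  disjoint f g -> disjoint g f.
Proof. rewrite !disjoint_iff, rst_R2. auto. Qed.

Lemma disjoint_comp {X A B Y : C} (h : Hom X A) (f g : Hom A B) (k : Hom B Y) :
  disjoint f g -> disjoint (h ;; f ;; k) (h ;; g ;; k).
Proof.
  unfold disjoint. intro H.
  assert (E : rst (h ;; f ;; k) ;; (h ;; g ;; k)
              = (rst (h ;; f ;; k) ;; h) ;; (rst f ;; g) ;; k).
  { assert (L : rst (h ;; f ;; k) ;; rst (h ;; f) = rst (h ;; f ;; k)) by apply rst_comp_le.
    symmetry.
    rewrite (comp_assoc _ _ _ _ _ (rst (h ;; f ;; k)) h).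
    rewrite <- (comp_assoc _ _ _ _ _ h (rst f) g), rst_R4.
    set (r := rst (h ;; f ;; k)) in *. set (s := rst (h ;; f)) in *.
    reassoc. rewrite <- (comp_assoc _ _ _ _ _ r s), L. reflexivity. }
  rewrite E. apply nowhere_defined_comp, H.
Qed.

Lemma pw_add {A : C} (u : Hom A A) (i k : nat) : pw u (i + k) = pw u i ;; pw u k.
Proof.
  induction i as [|i IH]; simpl.
  - rewrite comp_id_l. reflexivity.
  - rewrite IH, comp_assoc. reflexivity.
Qed.

(* If the loop guards [bT] and [bF] are never both defined, then the maps
   "run the body [u] exactly i times, then exit" of a while loop are pairwise
   disjoint: exiting after i steps forbids running step i+1. *)
Lemma while_iterates_disjoint {A Z : C} (u : Hom A A) (bT bF : Hom A Z) :
  nowhere_defined (rst bT ;; rst bF) ->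
  pairwise_disjoint (fun i => pw (rst bT ;; u) i ;; rst bF).
Proof.
  intro Hb. set (v := rst bT ;; u).
  assert (H : nowhere_defined (rst bF ;; v)).
  { unfold v. rewrite <- comp_assoc, rst_R2. apply nowhere_defined_comp_r, Hb. }
  assert (Hlt : forall i j, i < j -> disjoint (pw v i ;; rst bF) (pw v j ;; rst bF)).
  { intros i j Hij. replace j with (i + S (j - i - 1)) by lia.
    unfold disjoint. rewrite pw_add. simpl. set (m := j - i - 1).
    assert (M : rst (pw v i ;; rst bF) ;; pw v i = pw v i ;; rst bF)
      by (rewrite <- rst_R4, rst_rst; reflexivity).
    replace (rst (pw v i ;; rst bF) ;; (pw v i ;; (v ;; pw v m) ;; rst bF))
      with (rst (pw v i ;; rst bF) ;; pw v i ;; (v ;; pw v m) ;; rst bF)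
      by (reassoc; reflexivity).
    rewrite M. replace (pw v i ;; rst bF ;; (v ;; pw v m) ;; rst bF)
      with (pw v i ;; (rst bF ;; v) ;; (pw v m ;; rst bF)) by (reassoc; reflexivity).
    apply nowhere_defined_comp, H. }
  intros i j Hij. destruct (Nat.lt_total i j) as [L|[L|L]].
  - apply Hlt, L.
  - contradiction.
  - apply disjoint_sym, Hlt, L.
Qed.

Lemma exclusive_guards_precomp {W A Z : C} (h : Hom W A) (x y : Hom A Z) :
  nowhere_defined (rst x ;; rst y) -> nowhere_defined (rst (h ;; x) ;; rst (h ;; y)).
Proof.
  intro H. rewrite <- rst_R3, <- comp_assoc, <- rst_R4, <- (rst_R1 _ _ _ y).
  rewrite <- comp_assoc, (comp_assoc _ _ _ _ _ h).
  apply nowhere_defined_rst, nowhere_defined_comp, H.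
Qed.

Lemma join_rst {A B : C} (F : nat -> Hom A B) (j : Hom A B) :
  pairwise_disjoint F -> is_join F j ->
  is_join (fun i => rst (F i)) (rst j) /\ pairwise_disjoint (fun i => rst (F i)).
Proof.
  intros Fd Hj.
  assert (Fd' : pairwise_disjoint (fun i => rst (F i))).
  { intros i k Hik. apply (disjoint_rst_eq (F i) (F k)); try (symmetry; apply rst_rst).
    apply Fd, Hik. }
  split; [|exact Fd'].
  destruct (proj1 (HJ A A nat _ nat_countable Fd')) as [E HE].
  assert (Ej : j = E ;; j).
  { rewrite <- (comp_id_l _ _ _ (E ;; j)), <- comp_assoc.
    apply (join_unique F (fun i => idm A ;; rst (F i) ;; j));
      [| exact Hj | exact (disjoint_join_comp _ _ _ _ Fd' HE)].
    intro i. rewrite comp_id_l. symmetry. apply (proj1 Hj). }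
  assert (Le : rst E ;; rst j = E).
  { apply (proj2 HE). intro i. unfold le.
    rewrite rst_rst, <- rst_R3, (proj1 Hj i). reflexivity. }
  assert (Er : rst j = E).
  { rewrite Ej, <- Le at 1. rewrite comp_assoc, rst_R1, rst_R3. exact Le. }
  rewrite Er. exact HE.
Qed.

End JoinsAndDisjointness.

Section ReverseDerivativeFacts.
Context {X : RDRC}.

Lemma rst_RD {A B : X} (g : Hom A B) : rst (RD g) = rst (p0 ;; g).
Proof. rewrite (rd8 X). apply times_rst_idm. Qed.

Lemma rst_comp_RD {Z A B : X} (x : Hom Z (prod A B)) (g : Hom A B) :
  rst (x ;; RD g) = rst (x ;; p0 ;; g).
Proof. rewrite <- rst_comp_rst, rst_RD, rst_comp_rst, comp_assoc. reflexivity. Qed.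

Lemma RD_idm (A : X) : RD (idm A) = p1.
Proof.
  pose proof (rd9 X A A (idm A)) as H. rewrite rst_idm, times_idm, comp_id_l in H. exact H.
Qed.

Lemma RD_rst {A D : X} (x : Hom A D) : RD (rst x) = rst (p0 ;; x) ;; p1.
Proof. rewrite (rd9 X), times_rst_idm. reflexivity. Qed.

Lemma RD_p0 (A B : X) : RD (@p0 X A B) = p1 ;; iota0 A B.
Proof. apply (proj1 (rd3 X)). Qed.

Lemma RD_p1 (A B : X) : RD (@p1 X A B) = p1 ;; iota1 A B.
Proof. apply (proj2 (rd3 X)). Qed.

Lemma RD_zero (A B : X) : RD (@zero X A B) = zero.
Proof. apply (proj2 (rd1 X)). Qed.

Lemma RD_comp {A B D : X} (f : Hom A B) (g : Hom B D) :
  RD (f ;; g) = pair p0 (times f (idm D) ;; RD g) ;; RD f.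
Proof. rewrite (rd5 X). unfold times. rewrite comp_id_r. reflexivity. Qed.

Lemma RD_le {A B : X} (f g : Hom A B) : le f g -> RD f = rst (p0 ;; f) ;; RD g.
Proof.
  unfold le. intro H.
  transitivity (RD (rst f ;; g)); [rewrite H; reflexivity|].
  rewrite (rd5 X), RD_rst, rst_R4, pair_rst_l, pair_eta, comp_id_r.
  set (Y := rst (p0 ;; f) ;; RD g).
  rewrite <- comp_assoc, rst_R4.
  rewrite <- (comp_assoc _ _ _ _ _ (pair p0 Y) p0 f), pair_p0.
  rewrite (comp_assoc _ _ _ _ _ (rst Y) p0 f), rst_R3.
  rewrite (comp_assoc _ _ _ _ _ _ (pair p0 Y) p1), pair_p0_p1.
  rewrite rst_R2, comp_assoc, rst_R1. unfold Y. rewrite <- comp_assoc, rst_idem. reflexivity.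
Qed.

Lemma RD_comp_p1 {A B D : X} (G : Hom A (prod B D)) :
  RD (G ;; p1) = times (idm A) (iota1 B D) ;; RD G.
Proof.
  rewrite (rd5 X), RD_p1, <- comp_assoc, pair_p1, comp_assoc, pair_rst_r.
  unfold times. rewrite comp_id_r, comp_assoc. apply rst_absorb.
  rewrite rst_comp_RD, pair_p0.
  assert (T : rst (@p1 X A D ;; iota1 B D) = idm _) by prove_total.
  rewrite T, comp_id_l. apply rst_idem.
Qed.

Lemma RD_iota0 (A B : X) : RD (iota0 A B) = p1 ;; p0.
Proof.
  unfold iota0. rewrite (rd4 X), RD_idm, RD_zero, comp_zero_total by prove_total.
  rewrite add_zero_r, times_p1_total by apply rst_idm. reflexivity.
Qed.

Lemma RD_times_iota0 (A B D : X) :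
  RD (times (iota0 A B) (idm D)) = p1 ;; times p0 (idm D).
Proof.
  unfold times at 1. rewrite (rd4 X), comp_id_r, RD_p1, (rd5 X), RD_iota0, RD_p0.
  rewrite <- (comp_assoc _ _ _ _ _ (pair p0 _) p1 (iota0 A D)), pair_p0_p1.
  rewrite <- (comp_assoc _ _ _ _ _ (pair (p0 ;; p0) p1) p1 p0), pair_p1.
  rewrite (rst_comp_total p0 p0), p0_total, comp_id_l by apply p0_total.
  reassoc.
  rewrite <- (comp_assoc _ _ _ _ _ (times (idm _) p0) p1),
          <- (comp_assoc _ _ _ _ _ (times (idm _) p1) p1).
  rewrite !times_p1_total by apply rst_idm.
  rewrite times_p0_idm_sum, comp_add_r. reassoc. reflexivity.
Qed.

Lemma RD_p0_comp_p1 {A B D : X} (f : Hom A D) :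
  RD (@p0 X A B ;; f) ;; p1 = rst (p0 ;; p0 ;; f) ;; zero.
Proof.
  rewrite RD_comp, RD_p0. reassoc.
  rewrite iota0_p1, <- comp_assoc, pair_p0_p1, comp_zero_r, rst_comp_RD.
  rewrite times_p0_total by apply rst_idm. reassoc. reflexivity.
Qed.

Lemma Dfwd_iota0 {A B : X} (g : Hom A B) : iota0 A A ;; Dfwd (@RD X) g = rst g ;; zero.
Proof.
  unfold Dfwd. rewrite <- !comp_assoc.
  assert (E : iota0 A A ;; times (iota0 A B) (idm A) = pair (iota0 A B) zero) by prod_ext.
  rewrite E, (proj2 (rd2 X)), comp_assoc, zero_p1, rst_comp_RD, iota0_p0, comp_id_l.
  reflexivity.
Qed.

(* Daggering the reverse derivative of the forward derivative gives back the
   reverse derivative (from [RD.6]). *)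
Lemma RD_Dfwd_dagger {A B : X} (g : Hom A B) :
  times (iota0 A A) (idm B) ;; RD (Dfwd (@RD X) g) ;; p1 = RD g.
Proof.
  unfold Dfwd. set (M := RD (RD g)).
  rewrite RD_comp_p1, (rd5 X), RD_times_iota0.
  rewrite <- (comp_assoc _ _ _ _ _ (pair p0 _) p1), pair_p0_p1.
  reassoc. rewrite times_p1_total, comp_id_r by apply p0_total.
  pose proof (rd6 X A B g) as H6. fold M in H6.
  assert (H6' : times (idm A) (iota1 B B) ;; (pair (times (idm A) p0) (times zero p1)
     ;; times (iota0 (prod A B) A) (idm (prod A B)) ;; RD M ;; p1) = RD g).
  { rewrite H6, <- comp_assoc. rewrite <- (comp_id_l _ _ _ (RD g)) at 2.
    f_equal. prod_ext. }
  rewrite <- H6'.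
  assert (E : times (iota0 A A) (idm B) ;; times (idm (prod A A)) (iota1 A B)
                ;; pair (p0 ;; times (iota0 A B) (idm A)) p1
              = times (idm A) (iota1 B B) ;; pair (times (idm A) p0) (times zero p1)
                ;; times (iota0 (prod A B) A) (idm (prod A B))) by prod_ext.
  transitivity ((times (iota0 A A) (idm B) ;; times (idm (prod A A)) (iota1 A B)
                 ;; pair (p0 ;; times (iota0 A B) (idm A)) p1) ;; (RD M ;; p1)).
  { reassoc. reflexivity. }
  rewrite E. reassoc. reflexivity.
Qed.

Hypothesis HJ : has_countable_disjoint_joins X.

(* The reverse derivative preserves disjoint joins: each [R[F i]] is [R[j]]
   restricted to [rst (p0 ;; F i)], and these restrictions join to that of
   [p0 ;; j]. *)
Lemma RD_join {A B : X} (F : nat -> Hom A B) (j : Hom A B) :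
  pairwise_disjoint F -> is_join F j ->
  is_join (fun i => RD (F i)) (RD j) /\ pairwise_disjoint (fun i => RD (F i)).
Proof.
  intros Fd Hj. split.
  2:{ intros i k Hik.
      apply (disjoint_rst_eq HJ (p0 ;; F i ;; idm B) (p0 ;; F k ;; idm B)).
      - rewrite comp_id_r, rst_RD. reflexivity.
      - rewrite comp_id_r, rst_RD. reflexivity.
      - apply (disjoint_comp HJ), Fd, Hik. }
  destruct (join_rst HJ F j Fd Hj) as [J1 D1].
  pose proof (disjoint_join_comp HJ _ _ (@p0 X A B) (idm A) D1 J1) as J2.
  assert (D2 : pairwise_disjoint (fun i => @p0 X A B ;; rst (F i) ;; idm A)).
  { intros i k Hik. apply (disjoint_comp HJ), D1, Hik. }
  destruct (join_rst HJ _ _ D2 J2) as [J3 D3].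
  pose proof (disjoint_join_comp HJ _ _ (idm (prod A B)) (RD j) D3 J3) as J4.
  simpl in J4.
  assert (Ej : idm (prod A B) ;; rst (p0 ;; rst j ;; idm A) ;; RD j = RD j).
  { rewrite comp_id_l, comp_id_r, rst_comp_rst, <- rst_RD. apply rst_R1. }
  rewrite Ej in J4.
  refine (is_join_ext _ _ _ _ J4).
  intro i. rewrite (RD_le (F i) j (proj1 Hj i)), comp_id_l, comp_id_r, rst_comp_rst.
  reflexivity.
Qed.

End ReverseDerivativeFacts.

Section Simulation.
Context {X : RDRC}.

Definition simulates {A : X} (G : Hom (prod A A) (prod A A)) (g : Hom A A) : Prop :=
  iota0 A A ;; G = g ;; iota0 A A /\
  times (iota0 A A) (idm (prod A A)) ;; RD G ;; p1 = times (idm A) p1 ;; RD g.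

Lemma simulates_id (A : X) : simulates (idm (prod A A)) (idm A).
Proof.
  split.
  - rewrite comp_id_r, comp_id_l. reflexivity.
  - rewrite !RD_idm, !times_p1_total, comp_id_r by prove_total. reflexivity.
Qed.

(* Simulations compose.  Both sides are expanded with [RD.5]; the slice
   equation for [G1] moves [iota0] past [G1], after which the dagger equations
   for [G2] and then [G1] apply. *)
Lemma simulates_comp {A : X} (G1 G2 : Hom (prod A A) (prod A A)) (g1 g2 : Hom A A) :
  simulates G1 g1 -> simulates G2 g2 -> simulates (G1 ;; G2) (g1 ;; g2).
Proof.
  intros [P1 Q1] [P2 Q2]. split.
  { rewrite <- comp_assoc, P1, comp_assoc, P2, comp_assoc. reflexivity. }
  set (L := times (iota0 A A) (idm (prod A A))) in *.
  assert (HL : L ;; times G1 (idm (prod A A)) = times g1 (idm (prod A A)) ;; L).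
  { unfold L. rewrite !times_comp, P1, !comp_id_l. reflexivity. }
  set (Y := times g1 (idm (prod A A)) ;; L ;; RD G2).
  assert (HY : Y ;; p1 = times g1 p1 ;; RD g2).
  { unfold Y. reassoc. rewrite <- (comp_assoc _ _ _ _ _ L), Q2.
    rewrite <- comp_assoc, times_comp, comp_id_l, comp_id_r. reflexivity. }
  assert (HLp : L ;; pair p0 (times G1 (idm (prod A A)) ;; RD G2) = pair p0 Y ;; L).
  { assert (Lp0 : L ;; p0 = p0 ;; iota0 A A) by (apply times_p0_total, rst_idm).
    rewrite comp_pair, Lp0, <- comp_assoc, HL. fold Y.
    unfold L. rewrite pair_times, comp_id_r. reflexivity. }
  rewrite !RD_comp, <- (comp_assoc _ _ _ _ _ L), HLp. reassoc.
  rewrite <- (comp_assoc _ _ _ _ _ L), Q1.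
  rewrite <- !comp_assoc, pair_times, comp_id_r, HY, comp_pair.
  rewrite times_p0_total, <- comp_assoc, times_comp, comp_id_l, !comp_id_r
    by apply p1_total.
  reflexivity.
Qed.

Lemma simulates_guard {A Z : X} (b : Hom A Z) : simulates (rst (p0 ;; b)) (rst b).
Proof.
  split.
  - rewrite rst_R4, <- comp_assoc, iota0_p0, comp_id_l. reflexivity.
  - rewrite !RD_rst. rewrite <- !comp_assoc, !rst_R4. prod_simp. reflexivity.
Qed.

Lemma simulates_T {A : X} (f : Hom A A) : simulates (Tfd f) f.
Proof.
  unfold Tfd. split.
  - rewrite comp_pair, Dfwd_iota0, <- comp_assoc, iota0_p0, comp_id_l.
    unfold iota0. rewrite comp_pair, comp_id_r, (comp_zero_r _ _ _ _ f). reflexivity.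
  - set (L := times (iota0 A A) (idm (prod A A))).
    assert (S0 : L ;; (times (idm (prod A A)) p0 ;; RD (p0 ;; f)) ;; p1 = rst (p0 ;; f) ;; zero).
    { reassoc. rewrite RD_p0_comp_p1, <- !comp_assoc, comp_zero_r, rst_comp_rst.
      unfold L. prod_simp. reflexivity. }
    assert (S1 : L ;; (times (idm (prod A A)) p1 ;; RD (Dfwd (@RD X) f)) ;; p1
                 = times (idm A) p1 ;; RD f).
    { assert (E : L ;; times (idm (prod A A)) p1 = times (idm A) p1 ;; times (iota0 A A) (idm A))
        by (unfold L; rewrite !times_comp, !comp_id_l, !comp_id_r; reflexivity).
      rewrite <- comp_assoc, E, <- (RD_Dfwd_dagger f). reassoc. reflexivity. }
    rewrite (rd4 X), comp_add_r, add_p1, S0, S1, zero_absorb.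
    apply rst_absorb.
    rewrite rst_comp_RD, times_p0_total, comp_id_r by apply p1_total. apply rst_idem.
Qed.

Lemma simulates_while_iterate {A Z : X} (f : Hom A A) (b : Hom A Z) (i : nat) :
  simulates (pw (rst (p0 ;; b) ;; Tfd f) i) (pw (rst b ;; f) i).
Proof.
  induction i as [|i IH]; simpl.
  - apply simulates_id.
  - apply simulates_comp; [apply simulates_comp|]; auto using simulates_guard, simulates_T.
Qed.

(* If the dagger of [R[G]] computes [R[g]], then [R[g]] is the dagger of
   [R[G ;; p1]]: reading off the tangent component with [p1] is dual to
   inserting the cotangent with [iota1]. *)
Lemma simulation_dagger {A : X} (G : Hom (prod A A) (prod A A)) (g : Hom A A) :
  times (iota0 A A) (idm (prod A A)) ;; RD G ;; p1 = times (idm A) p1 ;; RD g ->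
  RD g = times (iota0 A A) (idm A) ;; RD (G ;; p1) ;; p1.
Proof.
  intro Q. rewrite RD_comp_p1, <- (comp_assoc _ _ _ _ _ (times (iota0 A A) (idm A))).
  assert (E : times (iota0 A A) (idm A) ;; times (idm (prod A A)) (iota1 A A)
              = times (idm A) (iota1 A A) ;; times (iota0 A A) (idm (prod A A)))
    by (rewrite !times_comp, !comp_id_l, !comp_id_r; reflexivity).
  rewrite E. reassoc. rewrite <- (comp_assoc _ _ _ _ _ (times (iota0 A A) _)), Q.
  rewrite <- comp_assoc, times_comp, comp_id_l, iota1_p1, times_idm, comp_id_l.
  reflexivity.
Qed.

Hypothesis HJ : has_countable_disjoint_joins X.

(* The dagger identity of a simulation passes to disjoint joins, since [R]
   and composition preserve them. *)
Lemma simulation_join {A : X} (G : nat -> Hom (prod A A) (prod A A)) (g : nat -> Hom A A)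
  (GJ : Hom (prod A A) (prod A A)) (gJ : Hom A A) :
  pairwise_disjoint G -> pairwise_disjoint g -> is_join G GJ -> is_join g gJ ->
  (forall i, times (iota0 A A) (idm (prod A A)) ;; RD (G i) ;; p1
             = times (idm A) p1 ;; RD (g i)) ->
  times (iota0 A A) (idm (prod A A)) ;; RD GJ ;; p1 = times (idm A) p1 ;; RD gJ.
Proof.
  intros DG Dg HG Hg Q.
  destruct (RD_join HJ G GJ DG HG) as [RG DRG].
  destruct (RD_join HJ g gJ Dg Hg) as [Rg DRg].
  rewrite <- (comp_id_r _ _ _ (_ ;; RD gJ)).
  apply (join_unique (fun i => times (iota0 A A) (idm (prod A A)) ;; RD (G i) ;; p1)
                     (fun i => times (idm A) p1 ;; RD (g i) ;; idm A)).
  - intro i. rewrite comp_id_r. apply Q.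
  - exact (disjoint_join_comp HJ _ _ _ _ DRG RG).
  - exact (disjoint_join_comp HJ _ _ _ (idm A) DRg Rg).
Qed.

End Simulation.

Theorem mainTheorem6 (X : RDRC) (HJ : has_countable_disjoint_joins X)
  (A : X) (f : Hom A A) (bT bF : Hom A one)
  (Hbb : nowhere_defined (rst bT ;; rst bF))
  (W : Hom A A) (W' : Hom (prod A A) (prod A A))
  (HW : is_join (fun i : nat => pw (rst bT ;; f) i ;; rst bF) W)
  (HW' : is_join (fun i : nat => pw (rst (p0 ;; bT) ;; Tfd f) i ;; rst (p0 ;; bF)) W') :
  RD W = times (iota0 A A) (idm A) ;; RD (W' ;; p1) ;; p1.
Proof.
  apply simulation_dagger. refine (simulation_join HJ _ _ _ _ _ _ HW' HW _).
  - apply (while_iterates_disjoint HJ), (exclusive_guards_precomp HJ), Hbb.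
  - apply (while_iterates_disjoint HJ), Hbb.
  - intro i. apply simulates_comp; [apply simulates_while_iterate | apply simulates_guard].
Qed.
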